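(* Let $\mathcal K$ be a quantum channel on $n\times n$ matrices described by Kraus operators $K_1,\dots,K_d\in\mathbb C^{n\times n}$ (with $\mathcal K(\rho)=\sum_j K_j\rho K_j^\dagger$, $\sum_j K_j^\dagger K_j=I_n$) such that $\mathrm{Tr}(K_j)=0$ for $j=2,\dots,d$. Then $$\cos^{-1}\left[\tfrac1n\,\lvert\mathrm{Tr}(K_1)\rvert\right]\le\lVert\mathcal K\rVert,$$ with $\cos^{-1}$ taking values in $[0,\pi]$.
   Context: For a unitary matrix $U$ of size $r$ with eigenvalues $e^{i\theta_j}$, $\theta_j\in(-\pi,\pi]$, its time-energy cost is $\lVert U\rVert=\max_{1\le j\le r}|\theta_j|$. For a quantum channel $\mathcal K$ acting on an $n$-dimensional system $A$, its time-energy cost is $\lVert\mathcal K\rVert=\inf_U\lVert U\rVert$, where the infimum is over all finite-dimensional ancilla systems $B$ with a fixed standard state $|0\rangle_B$ and all unitaries $U_{BA}$ on $B\otimes A$ such that $\mathcal K(\rho)=\mathrm{Tr}_B[U_{BA}(|0\rangle_B\langle 0|\otimes\rho_A)U_{BA}^\dagger]$ for all density matrices $\rho$ on $A$. *)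

From mathcomp Require Import all_boot all_order all_algebra.
From mathcomp.real_closed Require Import complex mxtens.
From mathcomp Require Import classical_sets reals trigo.
Set Implicit Arguments. Unset Strict Implicit. Unset Printing Implicit Defensive.
Import Order.TTheory GRing.Theory Num.Theory.
Local Open Scope ring_scope.
Local Open Scope classical_set_scope.

Section QDefs.
Variable R : realType.
Local Notation C := R[i].

Definition dag {m p : nat} (A : 'M[C]_(m, p)) : 'M[C]_(p, m) :=
  (map_mx (@conjc R) A)^T.

Definition unitary {r : nat} (U : 'M[C]_r) : Prop :=
  dag U *m U = 1%:M /\ U *m dag U = 1%:M.

Definition density {n : nat} (rho : 'M[C]_n) : Prop :=
  [/\ dag rho = rho,
      (forall v : 'cV[C]_n, 0 <= (dag v *m rho *m v) 0 0)
    & \tr rho = 1].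

Definition kraus_map {n d : nat} (K : 'I_d -> 'M[C]_n) (rho : 'M[C]_n)
  : 'M[C]_n := \sum_(j < d) K j *m rho *m dag (K j).

(* partial trace over the first factor B of B (x) A, dim B = m, dim A = n,
   with the Kronecker indexing of mxtens (B index first). *)
Definition ptraceB {m n : nat} (X : 'M[C]_(m * n)) : 'M[C]_n :=
  \matrix_(i, j) \sum_(b < m) X (mxtens_index (b, i)) (mxtens_index (b, j)).

(* time-energy cost of a unitary: max |theta_j| over the eigenvalues
   e^{i theta_j}, theta_j in (-pi, pi] (the set is finite, so sup = max) *)
Definition unitary_cost {r : nat} (U : 'M[C]_r) : R :=
  sup [set t : R | exists theta : R,
         [/\ - pi < theta <= pi,
             eigenvalue U (cos theta +i* sin theta)%C
           & t = `|theta|]].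

(* time-energy cost of a channel on an n-dimensional system: infimum over
   ancillas B of dimension m.+1 (standard state |0> = basis vector 0) and
   unitaries U on B (x) A dilating the channel. *)
Definition channel_cost {n : nat} (Kc : 'M[C]_n -> 'M[C]_n) : R :=
  inf [set c : R | exists (m : nat) (U : 'M[C]_(m.+1 * n)),
         [/\ unitary U,
             (forall rho : 'M[C]_n, density rho ->
                Kc rho = ptraceB (U *m (delta_mx (ord0 : 'I_m.+1) ord0 *t rho) *m dag U))
           & c = unitary_cost U]].

End QDefs.

(* Let U on B (x) A be a unitary dilation of the channel, and U_b the n x n
   blocks of its first block column (ancilla input |0>, output |b>).  The
   linear functional F |-> sum_{k,l} F(E_kl)_kl evaluates to
   sum_j |Tr K_j|^2 = |Tr K_1|^2 on the Kraus representation and to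
   sum_b |Tr U_b|^2 on the dilation; since both are linear and agree on
   density matrices, |Tr U_0| <= |Tr K_1|.  On the other hand each diagonal
   entry of U is a convex combination of its eigenvalues e^{i theta} with
   |theta| <= ||U||, so Re U_ii >= cos ||U||, whence
   n cos ||U|| <= Re Tr U_0 <= |Tr K_1|.  Stinespring's dilation shows that
   the infimum defining the channel cost is taken over a nonempty set. *)

From HB Require Import structures.
From mathcomp Require Import all_boot all_order all_algebra.
From mathcomp.real_closed Require Import complex mxtens.
From mathcomp Require Import classical_sets reals trigo.
From mathcomp Require Import sesquilinear spectral ring.
Set Implicit Arguments. Unset Strict Implicit. Unset Printing Implicit Defensive.
Import Order.TTheory GRing.Theory Num.Theory.
Local Open Scope ring_scope.
Local Open Scope sesquilinear_scope.

Section TimeEnergyCost.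
Variable R : realType.
Local Notation C := R[i].

Lemma dagE m p (A : 'M[C]_(m, p)) : dag A = A ^t* .
Proof. by rewrite /dag map_trmx. Qed.

Lemma dagK m p (A : 'M[C]_(m, p)) : dag (dag A) = A.
Proof. by apply/matrixP => i j; rewrite !mxE conjcK. Qed.

Lemma dag_mul m p q (A : 'M[C]_(m, p)) (B : 'M[C]_(p, q)) :
  dag (A *m B) = dag B *m dag A.
Proof. by rewrite /dag map_mxM trmx_mul. Qed.

Lemma dagZ m p (a : C) (A : 'M[C]_(m, p)) : dag (a *: A) = a^* *: dag A.
Proof. by apply/matrixP => i j; rewrite !mxE rmorphM. Qed.

Lemma dagB m p (A B : 'M[C]_(m, p)) : dag (A - B) = dag A - dag B.
Proof. by apply/matrixP => i j; rewrite !mxE rmorphB. Qed.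

Lemma dag0 m p : dag (0 : 'M[C]_(m, p)) = 0.
Proof. by apply/matrixP => i j; rewrite !mxE rmorph0. Qed.

Lemma dag1 m : dag (1%:M : 'M[C]_m) = 1%:M.
Proof. by apply/matrixP => i j; rewrite !mxE eq_sym rmorph_nat. Qed.

Lemma dag_block m1 m2 n1 n2 (A : 'M[C]_(m1, n1)) (B : 'M[C]_(m1, n2))
    (A' : 'M[C]_(m2, n1)) (B' : 'M[C]_(m2, n2)) :
  dag (block_mx A B A' B') = block_mx (dag A) (dag A') (dag B) (dag B').
Proof. by rewrite /dag map_block_mx tr_block_mx. Qed.

Lemma dag_cast m p m' p' (em : m = m') (ep : p = p') (A : 'M[C]_(m, p)) :
  dag (castmx (em, ep) A) = castmx (ep, em) (dag A).
Proof. by rewrite /dag map_castmx trmx_cast. Qed.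

Lemma dag_mxE m p (A : 'M[C]_(m, p)) i j : dag A i j = (A j i)^*.
Proof. by rewrite !mxE. Qed.

Lemma outer_mxE n (u v : 'cV[C]_n) i j : (u *m dag v) i j = u i 0 * (v j 0)^*.
Proof. by rewrite mxE big_ord1 !mxE. Qed.

Lemma mxtrace_outer n (w : 'cV[C]_n) : \tr (w *m dag w) = \sum_i `|w i 0| ^+ 2.
Proof. by apply: eq_bigr => i _; rewrite outer_mxE normCK. Qed.

Lemma eigenvalue_unitary_norm r (U : 'M[C]_r) l :
  unitary U -> eigenvalue U l -> `|l| = 1.
Proof.
move=> [_ UU] /eigenvalueP [v Uv v_neq0].
have vU_norm : (v *m U) *m (v *m U) ^t* = v *m v ^t*.
  by rewrite trmx_mul map_mxM mulmxA -(mulmxA v) -dagE UU mulmx1.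
have lv_norm : (v *m U) *m (v *m U) ^t* = `|l| ^+ 2 *: (v *m v ^t*).
  by rewrite Uv linearZ /= map_mxZ -scalemxAl -scalemxAr scalerA normCK.
have v_norm_neq0 : (v *m v ^t*) 0 0 != 0 by rewrite -dotmxE dnorm_eq0.
have /(mulIf v_norm_neq0) /esym /eqP : 1 * (v *m v ^t*) 0 0 = `|l| ^+ 2 * (v *m v ^t*) 0 0.
  by rewrite mul1r -{1}vU_norm lv_norm mxE.
rewrite sqrf_eq1 => /orP [/eqP // | /eqP l_eqN1].
by have := normr_ge0 l; rewrite l_eqN1 ler0N1.
Qed.

Lemma unit_circle_polar (l : C) : `|l| = 1 ->
  exists2 theta : R, - pi < theta <= pi & l = (cos theta +i* sin theta)%C.
Proof.
case: l => a b; rewrite normc_def /= => /(congr1 (@complex.Re R)) /= ab_norm.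
have ab1 : a ^+ 2 + b ^+ 2 = 1.
  by rewrite -[LHS]sqr_sqrtr ?addr_ge0 ?sqr_ge0 // ab_norm expr1n.
have a_bound : -1 <= a <= 1.
  rewrite -ler_norml -(@ler_pXn2r _ 2) ?normr_ge0 ?real_normK ?num_real //.
    by rewrite expr1n -ab1 lerDl sqr_ge0.
  by rewrite qualifE /= ler01.
have cos_acos : cos (acos a) = a by rewrite acosK // in_itv /= a_bound.
have sin_acos : sin (acos a) = `|b|.
  by rewrite sin_acos // -ab1 addrC addKr sqrtr_sqr.
have [b_ge0 | b_lt0] := lerP 0 b.
  exists (acos a); last by rewrite cos_acos sin_acos ger0_norm.
  by rewrite acos_lepi // andbT (lt_le_trans _ (acos_ge0 _)) // oppr_lt0 pi_gt0.
exists (- acos a); last by rewrite cosN sinN cos_acos sin_acos ltr0_norm ?opprK.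
rewrite ltrN2 acos_ltpi ?(andP a_bound).2 //= ?andbT.
  by rewrite (le_trans _ (@pi_ge0 R)) // oppr_le0 acos_ge0.
rewrite lt_neqAle (andP a_bound).1 andbT; apply/eqP => a_eqN1.
move: ab1; rewrite -a_eqN1 sqrrN expr1n => /(canRL (addKr _)); rewrite addNr.
by move/eqP; rewrite sqrf_eq0 => /eqP b0; rewrite b0 ltxx in b_lt0.
Qed.

(* The diagonal entries of a normal matrix are convex combinations of its
   eigenvalues, with weights read off a unitary eigenbasis. *)
Lemma unitary_Re_diag_ge r (U : 'M[C]_r) (a : C) : a \is Num.real -> unitary U ->
  (forall l, eigenvalue U l -> a <= 'Re l) -> forall i, a <= 'Re (U i i).
Proof.
move=> a_real [UU1 UU2] a_le i.
have U_normal : U \is normalmx by apply/normalmxP; rewrite -!dagE UU1 UU2.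
have U_diag := orthomx_spectralP U_normal.
set P := spectralmx U in U_diag; set D := spectral_diag U in U_diag.
have P_unitary : P \is unitarymx := spectral_unitarymx U.
have P_unit : P \in unitmx := spectral_unit U.
have PP : P ^t* *m P = 1%:M by rewrite -invmx_unitary // mulVmx.
have D_eig j : eigenvalue U (D 0 j).
  apply/eigenvalueP; exists (row j P).
    rewrite -row_mul U_diag !mulmxA mulmxV // mul1mx mul_diag_mx.
    by apply/rowP => k; rewrite !mxE.
  apply/eqP => /(congr1 (mulmx^~ (invmx P))); rewrite -row_mul mulmxV // mul0mx.
  by move/rowP/(_ j); rewrite !mxE eqxx /= => /eqP; rewrite oner_eq0.
have -> : U i i = \sum_j `|P j i| ^+ 2 * D 0 j.
  rewrite {1}U_diag invmx_unitary // mul_mx_diag mxE.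
  by apply: eq_bigr => j _; rewrite !mxE normCKC mulrAC.
have weights1 : \sum_j `|P j i| ^+ 2 = 1.
  have : (P ^t* *m P) i i = 1 by rewrite PP mxE eqxx.
  rewrite mxE => <-.
  by apply: eq_bigr => j _; rewrite !mxE normCK mulrC.
rewrite -[a]mul1r -weights1 mulr_suml raddf_sum; apply: ler_sum => j _.
rewrite /= ReMl ?rpredX ?normr_real //.
by rewrite ler_wpM2l ?exprn_ge0 ?normr_ge0 ?a_le.
Qed.

Lemma unitary_cost_diag_bound r (U : 'M[C]_r) : (0 < r)%N -> unitary U ->
  0 <= unitary_cost U <= pi /\ forall i, ((cos (unitary_cost U))%:C)%C <= 'Re (U i i).
Proof.
move=> r_gt0 U_unitary; rewrite /unitary_cost; set T := (X in sup X).
have T_bound t : T t -> 0 <= t <= pi.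
  move=> [th [/andP [th_gt th_le] _ ->]]; rewrite normr_ge0 ler_norml th_le andbT.
  exact: ltW.
have T_eig l : eigenvalue U l -> exists2 th, T `|th| & complex.Re l = cos th.
  move=> l_eig; have [th th_bound l_eq] := unit_circle_polar (eigenvalue_unitary_norm U_unitary l_eig).
  by exists th; [exists th; split; rewrite -?l_eq | rewrite l_eq].
have [l0 l0_eig] := eigenvalue_closed U r_gt0.
have [th0 T_th0 _] := T_eig l0 l0_eig.
have T_sup : has_sup T by split; [exists `|th0| | exists pi => t /T_bound /andP[]].
have sup_ge0 : 0 <= sup T by apply: le_trans (sup_upper_bound T_sup T_th0).
have sup_le : sup T <= pi by apply: ge_sup => [|t /T_bound /andP[]]; first exists `|th0|.
split=> [|i]; first by rewrite sup_ge0 sup_le.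
apply: unitary_Re_diag_ge => // [|l l_eig]; first by rewrite complex_real.
have [th T_th Re_l] := T_eig l l_eig.
have /andP [th_ge0 th_le] := T_bound _ T_th.
rewrite -complexRe lecR Re_l -(cos_norm th) leNgt ltr_cos ?in_itv /= ?sup_ge0 ?sup_le ?th_ge0 //.
by rewrite -leNgt; apply: sup_upper_bound.
Qed.

(* outside [-1, 1] the library's [acos] takes the junk value 0 *)
Lemma acos_gt1 (x : R) : 1 < x -> acos x = 0.
Proof.
move=> x_gt1; rewrite unlock /acos; case: xgetP => //= y _ [_ cos_y].
by move: x_gt1; rewrite -cos_y ltNge cos_le1.
Qed.

Lemma acos_le (x c : R) : 0 <= x -> 0 <= c <= pi -> cos c <= x -> acos x <= c.
Proof.
move=> x_ge0 /andP [c_ge0 c_le] cos_le.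
have [x_le1 | x_gt1] := lerP x 1; last by rewrite acos_gt1.
have x_bound : -1 <= x <= 1 by rewrite x_le1 andbT (le_trans _ x_ge0) // lerN10.
rewrite leNgt -ltr_cos ?in_itv /= ?c_ge0 ?c_le ?acos_ge0 ?acos_lepi //.
by rewrite acosK ?in_itv //= -leNgt.
Qed.

Lemma kraus_map_is_linear n d (K : 'I_d -> 'M[C]_n) : linear (kraus_map K).
Proof.
move=> a X Y; rewrite /kraus_map scaler_sumr -big_split /=; apply: eq_bigr => j _.
by rewrite mulmxDr mulmxDl -scalemxAr -scalemxAl.
Qed.

HB.instance Definition _ n d (K : 'I_d -> 'M[C]_n) :=
  GRing.isLinear.Build C 'M[C]_n 'M[C]_n *:%R (kraus_map K) (kraus_map_is_linear K).

Definition dilation_map m n (U : 'M[C]_(m.+1 * n)) (rho : 'M[C]_n) : 'M[C]_n :=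
  ptraceB (U *m (delta_mx ord0 ord0 *t rho) *m dag U).

Lemma dilation_map_is_linear m n (U : 'M[C]_(m.+1 * n)) : linear (dilation_map U).
Proof.
move=> a X Y; rewrite /dilation_map.
have -> : (delta_mx ord0 ord0 : 'M[C]_m.+1) *t (a *: X + Y) =
    a *: (delta_mx ord0 ord0 *t X) + delta_mx ord0 ord0 *t Y.
  by apply/matrixP => i j; rewrite !mxE mulrDr mulrCA.
rewrite mulmxDr mulmxDl -scalemxAr -scalemxAl; apply/matrixP => i j.
by rewrite !mxE mulr_sumr -big_split; apply: eq_bigr => b _; rewrite !mxE.
Qed.

HB.instance Definition _ m n (U : 'M[C]_(m.+1 * n)) :=
  GRing.isLinear.Build C 'M[C]_n 'M[C]_n *:%R (dilation_map U) (dilation_map_is_linear U).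

Lemma density_normalized_outer n (w : 'cV[C]_n) (s := \tr (w *m dag w)) :
  s != 0 -> density (s^-1 *: (w *m dag w)).
Proof.
move=> s_neq0.
have s_ge0 : 0 <= s.
  by rewrite /s mxtrace_outer sumr_ge0 // => i _; rewrite exprn_ge0 ?normr_ge0.
have conj_sV : (s^-1)^* = s^-1 by apply: conj_Creal; rewrite ger0_real ?invr_ge0.
split=> [|v|]; first by rewrite dagZ dag_mul dagK conj_sV.
  rewrite -scalemxAr -scalemxAl mxE !mulmxA -(mulmxA (dag v *m w)) mxE big_ord1.
  have -> : dag w *m v = dag (dag v *m w) by rewrite dag_mul dagK.
  by rewrite dag_mxE -normCK mulr_ge0 ?invr_ge0 ?exprn_ge0 ?normr_ge0.
by rewrite mxtraceZ mulVf.
Qed.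

Lemma linear_delta_eq n (F G : {linear 'M[C]_n -> 'M[C]_n}) :
  (forall k l, F (delta_mx k l) = G (delta_mx k l)) -> F =1 G.
Proof.
move=> FG_delta X; rewrite (matrix_sum_delta X) !linear_sum; apply: eq_bigr => k _.
by rewrite !linear_sum; apply: eq_bigr => l _; rewrite !linearZ /= FG_delta.
Qed.

(* Normalized projections [w w^dagger] are densities, and they span all
   matrices by polarization. *)
Lemma linear_density_eq n (F G : {linear 'M[C]_n -> 'M[C]_n}) :
  (forall rho, density rho -> F rho = G rho) -> F =1 G.
Proof.
move=> FG_density.
have FG_outer_self (w : 'cV[C]_n) : F (w *m dag w) = G (w *m dag w).
  have [tr0 | tr_neq0] := eqVneq (\tr (w *m dag w)) 0.
    suff -> : w = 0 by rewrite mul0mx !raddf0.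
    have sq_ge0 (k : 'I_n) : true -> 0 <= `|w k 0| ^+ 2 by rewrite exprn_ge0 ?normr_ge0.
    move: tr0; rewrite mxtrace_outer => /(psumr_eq0P sq_ge0) w0.
    apply/matrixP => i j; rewrite ord1 mxE.
    by have /eqP := w0 i isT; rewrite expf_eq0 /= normr_eq0 => /eqP.
  have := FG_density _ (density_normalized_outer tr_neq0).
  by rewrite !linearZ => /(scalerI (invr_neq0 tr_neq0)).
have FG_outer (u v : 'cV[C]_n) : F (u *m dag v) = G (u *m dag v).
  have [j j2 conj_j] : exists2 j : C, j ^+ 2 = -1 & j^* = - j.
    by exists 'i; [exact: sqrCi | exact: conjCi].
  have polarization : 2%:R *: (u *m dag v) =
      ((u + v) *m dag (u + v) - u *m dag u - v *m dag v)
    + j *: ((u + j *: v) *m dag (u + j *: v) - u *m dag u - v *m dag v).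
    apply/matrixP => i k; rewrite !(outer_mxE, mxE) !rmorphD !rmorphM /= conj_j mulNr.
    move: (u i 0) (v i 0) ((u k 0)^*) ((v k 0)^*) => a b a' b'.
    transitivity (2 * (a * b') + (j ^+ 2 + 1) * (b * a' - a * b' - j * (b * b'))).
      by rewrite j2 addNr mul0r addr0.
    ring.
  have : F (2%:R *: (u *m dag v)) = G (2%:R *: (u *m dag v)).
    by rewrite polarization !linearD !linearN !linearZ !FG_outer_self.
  by rewrite !linearZ => /scalerI; apply; rewrite pnatr_eq0.
apply: linear_delta_eq => k l.
have <- : (delta_mx k 0 : 'cV[C]_n) *m dag (delta_mx l 0) = delta_mx k l.
  apply/matrixP => i j; rewrite outer_mxE !mxE.
  by case: (i == k); case: (j == l); rewrite ?rmorph1 ?rmorph0 ?mulr0 ?mul0r ?mulr1.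
exact: FG_outer.
Qed.

Lemma mul_delta_mxE m p q (A : 'M[C]_(m, p)) (B : 'M[C]_(p, q)) k l i j :
  (A *m delta_mx k l *m B) i j = A i k * B l j.
Proof.
rewrite mxE (bigD1 l) //= big1 ?addr0 => [|z z_neq_l]; last first.
  by rewrite mxE big1 ?mul0r // => y _; rewrite mxE (negPf z_neq_l) andbF mulr0.
rewrite mxE (bigD1 k) //= big1 ?addr0 => [|y y_neq_k]; last first.
  by rewrite mxE (negPf y_neq_k) mulr0.
by rewrite mxE !eqxx mulr1.
Qed.

Lemma tens_delta_mx m n (a b : 'I_m) (k l : 'I_n) :
  (delta_mx a b : 'M[C]_m) *t (delta_mx k l : 'M[C]_n) =
  delta_mx (mxtens_index (a, k)) (mxtens_index (b, l)).
Proof.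
apply/matrixP => x y.
rewrite -[x]mxtens_unindexK -[y]mxtens_unindexK.
case: (mxtens_unindex x) => x1 x2; case: (mxtens_unindex y) => y1 y2.
rewrite tensmxE !mxE !(inj_eq (can_inj (@mxtens_indexK _ _))) !xpair_eqE.
by case: (x1 == a); case: (y1 == b); case: (x2 == k); case: (y2 == l);
  rewrite /= ?mulr0 ?mul0r ?mulr1.
Qed.

(* [choi_overlap F] is <Omega| (id (x) F)(|Omega><Omega|) |Omega> for the
   unnormalized maximally entangled vector Omega = sum_k |k>|k>. *)
Definition choi_overlap n (F : 'M[C]_n -> 'M[C]_n) : C :=
  \sum_k \sum_l F (delta_mx k l) k l.

Lemma choi_overlap_kraus n d (K : 'I_d -> 'M[C]_n) :
  choi_overlap (kraus_map K) = \sum_j `|\tr (K j)| ^+ 2.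
Proof.
have entryE k l : kraus_map K (delta_mx k l) k l = \sum_j K j k k * (K j l l)^*.
  by rewrite /kraus_map summxE; apply: eq_bigr => j _; rewrite mul_delta_mxE dag_mxE.
rewrite /choi_overlap; under eq_bigr => k _ do under eq_bigr => l _ do rewrite entryE.
under eq_bigr => k _ do rewrite exchange_big /=.
rewrite exchange_big /=; apply: eq_bigr => j _.
rewrite normCK /mxtrace rmorph_sum mulr_suml; apply: eq_bigr => k _.
by rewrite mulr_sumr.
Qed.

Lemma choi_overlap_dilation m n (U : 'M[C]_(m.+1 * n)) :
  choi_overlap (dilation_map U) =
  \sum_b `|\sum_k U (mxtens_index (b, k)) (mxtens_index (ord0, k))| ^+ 2.
Proof.
have entryE k l : dilation_map U (delta_mx k l) k l =
    \sum_b U (mxtens_index (b, k)) (mxtens_index (ord0, k)) *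
      (U (mxtens_index (b, l)) (mxtens_index (ord0, l)))^*.
  rewrite mxE tens_delta_mx; apply: eq_bigr => b _.
  by rewrite mul_delta_mxE dag_mxE.
rewrite /choi_overlap; under eq_bigr => k _ do under eq_bigr => l _ do rewrite entryE.
under eq_bigr => k _ do rewrite exchange_big /=.
rewrite exchange_big /=; apply: eq_bigr => b _.
rewrite normCK rmorph_sum mulr_suml; apply: eq_bigr => k _.
by rewrite mulr_sumr.
Qed.

Lemma dilation_block_trace_le n d (K : 'I_d.+1 -> 'M[C]_n) m (U : 'M[C]_(m.+1 * n)) :
  (forall j : 'I_d.+1, j != ord0 -> \tr (K j) = 0) ->
  (forall rho, density rho -> kraus_map K rho = dilation_map U rho) ->
  `|\sum_k U (mxtens_index (ord0, k)) (mxtens_index (ord0, k))| <= `|\tr (K ord0)|.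
Proof.
move=> K_traceless KU.
have KU_all := linear_density_eq KU.
have : choi_overlap (kraus_map K) = choi_overlap (dilation_map U).
  by apply: eq_bigr => k _; apply: eq_bigr => l _; rewrite KU_all.
rewrite choi_overlap_kraus choi_overlap_dilation (bigD1 ord0) //= big1 => [|j /K_traceless ->]; last first.
  by rewrite normr0 expr0n.
rewrite addr0 (bigD1 ord0) //= => overlap_eq.
rewrite -(ler_pXn2r (isT : (0 < 2)%N)) ?nnegrE ?normr_ge0 // overlap_eq lerDl.
by apply: sumr_ge0 => b _; rewrite exprn_ge0 ?normr_ge0.
Qed.

Lemma acos_trace_le_unitary_cost n d (K : 'I_d.+1 -> 'M[C]_n) m (U : 'M[C]_(m.+1 * n)) :
  (0 < n)%N ->
  (forall j : 'I_d.+1, j != ord0 -> \tr (K j) = 0) ->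
  unitary U ->
  (forall rho, density rho -> kraus_map K rho = dilation_map U rho) ->
  acos (complex.Re `|\tr (K ord0)| / n%:R) <= unitary_cost U.
Proof.
move=> n_gt0 K_traceless U_unitary KU.
have mn_gt0 : (0 < m.+1 * n)%N by rewrite muln_gt0.
have [c_bound cos_le_diag] := unitary_cost_diag_bound mn_gt0 U_unitary.
have block_le := dilation_block_trace_le K_traceless KU.
set c := unitary_cost U in c_bound cos_le_diag *.
set t := \sum_k _ in block_le.
have ncos_le : ((cos c)%:C)%C *+ n <= 'Re t.
  rewrite /t raddf_sum -[n in _ *+ n]card_ord -sumr_const.
  by apply: ler_sum => k _; apply: cos_le_diag.
have trE : `|\tr (K ord0)| = ((complex.Re `|\tr (K ord0)|)%:C)%C by rewrite normc_def.
set x := complex.Re _ in trE *.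
have ncos_le_x : cos c *+ n <= x.
  rewrite -lecR rmorphMn /= -trE (le_trans ncos_le) // (le_trans _ block_le) //.
  exact: (leif_Re_Creal t).1.
have x_ge0 : 0 <= x by rewrite -lecR -trE normr_ge0.
apply: acos_le => //; first by rewrite divr_ge0 ?ler0n.
by rewrite ler_pdivlMr ?ltr0n // mulr_natr.
Qed.

Lemma big_mxtens_index p n (F : 'I_(p * n) -> C) :
  \sum_r F r = \sum_(j < p) \sum_(i < n) F (mxtens_index (j, i)).
Proof.
rewrite pair_big (reindex (@mxtens_index p n)) /=; last first.
  by exists (@mxtens_unindex p n) => x _; rewrite (mxtens_indexK, mxtens_unindexK).
by apply: eq_bigr => -[j i].
Qed.

Lemma castmx_mul m p q m' p' q' (em : m = m') (ep : p = p') (eq : q = q')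
    (A : 'M[C]_(m, p)) (B : 'M[C]_(p, q)) :
  castmx (em, ep) A *m castmx (ep, eq) B = castmx (em, eq) (A *m B).
Proof. by case: m' / em; case: p' / ep; case: q' / eq; rewrite !castmx_id. Qed.

Lemma castmx1 m m' (em : m = m') : castmx (em, em) (1%:M : 'M[C]_m) = 1%:M.
Proof. by case: m' / em; rewrite castmx_id. Qed.

Section Stinespring.
Variables (n p : nat) (K : 'I_p -> 'M[C]_n).

Definition kraus_isometry : 'M[C]_(p * n, n) :=
  \matrix_(r, x) K (mxtens_unindex r).1 (mxtens_unindex r).2 x.
Local Notation V := kraus_isometry.

Lemma kraus_isometryE j k x : V (mxtens_index (j, k)) x = K j k x.
Proof. by rewrite mxE mxtens_indexK. Qed.

Definition isometry_compl : 'M[C]_(p * n) := 1%:M - V *m dag V.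
Local Notation P := isometry_compl.

Lemma dag_isometry_compl : dag P = P.
Proof. by rewrite /P dagB dag1 dag_mul dagK. Qed.

(* The isometry [V] stacking the Kraus operators, completed to the unitary
   [[V, P], [0, V^dagger]] with [P = 1 - V V^dagger]; the extra ancilla
   level [p] receives the zero block. *)
Definition stinespring : 'M[C]_(p.+1 * n) :=
  castmx (esym (mulSnr p n), esym (mulSn p n)) (block_mx V P 0 (dag V)).

Lemma stinespringE_kraus (b : 'I_p) k x :
  stinespring (mxtens_index (widen_ord (leqnSn p) b, k)) (mxtens_index (ord0, x)) =
  K b k x.
Proof.
rewrite castmxE /=.
have -> : cast_ord (esym (esym (mulSnr p n))) (mxtens_index (widen_ord (leqnSn p) b, k)) =
    lshift n (mxtens_index (b, k)) by apply: val_inj.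
have -> : cast_ord (esym (esym (mulSn p n))) (mxtens_index (ord0 : 'I_p.+1, x)) =
    lshift (p * n) x by apply: val_inj => /=; rewrite mul0n add0n.
by rewrite block_mxEul kraus_isometryE.
Qed.

Lemma stinespringE_last k x :
  stinespring (mxtens_index (ord_max, k)) (mxtens_index (ord0, x)) = 0.
Proof.
rewrite castmxE /=.
have -> : cast_ord (esym (esym (mulSnr p n))) (mxtens_index (ord_max : 'I_p.+1, k)) =
    rshift (p * n) k by apply: val_inj.
have -> : cast_ord (esym (esym (mulSn p n))) (mxtens_index (ord0 : 'I_p.+1, x)) =
    lshift (p * n) x by apply: val_inj => /=; rewrite mul0n add0n.
by rewrite block_mxEdl mxE.
Qed.

Lemma stinespring_dilation : kraus_map K =1 dilation_map stinespring.
Proof.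
move=> rho; apply: linear_delta_eq rho => x y; apply/matrixP => k l.
rewrite /kraus_map summxE mxE tens_delta_mx big_ord_recr /=.
rewrite mul_delta_mxE stinespringE_last mul0r addr0; apply: eq_bigr => b _.
by rewrite !mul_delta_mxE !dag_mxE !stinespringE_kraus.
Qed.

Hypothesis K_tp : \sum_j dag (K j) *m K j = 1%:M.

Lemma kraus_isometryP : dag V *m V = 1%:M.
Proof.
rewrite -K_tp; apply/matrixP => k l; rewrite summxE mxE big_mxtens_index.
apply: eq_bigr => j _; rewrite mxE; apply: eq_bigr => i _.
by rewrite !mxE !mxtens_indexK.
Qed.

Lemma isometry_compl_mul : P *m V = 0.
Proof. by rewrite mulmxBl mul1mx -mulmxA kraus_isometryP mulmx1 subrr. Qed.

Lemma mul_isometry_compl : dag V *m P = 0.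
Proof. by rewrite mulmxBr mulmx1 mulmxA kraus_isometryP mul1mx subrr. Qed.

Lemma isometry_compl_idem : P *m P = P.
Proof. by rewrite {1}/P mulmxBl mul1mx -mulmxA mul_isometry_compl mulmx0 subr0. Qed.

Lemma stinespring_unitary : unitary stinespring.
Proof.
rewrite /unitary /stinespring dag_cast !castmx_mul dag_block dag0 dag_isometry_compl dagK.
rewrite !mulmx_block kraus_isometryP mul_isometry_compl isometry_compl_mul.
rewrite isometry_compl_idem !mul0mx !mulmx0 !addr0 !add0r [V *m _ + _]addrC.
by rewrite /isometry_compl subrK -!scalar_mx_block !castmx1.
Qed.
End Stinespring.
End TimeEnergyCost.

Unset Implicit Arguments.

Theorem lemma2 (R : realType) (n d : nat) (K : 'I_d.+1 -> 'M[R[i]]_n) :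
  (0 < n)%N ->
  \sum_(j < d.+1) dag (K j) *m K j = 1%:M ->
  (forall j : 'I_d.+1, j != ord0 -> \tr (K j) = 0) ->
  acos (complex.Re `|\tr (K ord0)| / n%:R) <= channel_cost (kraus_map K).
Proof.
move=> n_gt0 K_tp K_traceless; apply: lb_le_inf.
  exists (unitary_cost (stinespring K)), d.+1, (stinespring K); split=> //.
    exact: stinespring_unitary.
  by move=> rho _; apply: stinespring_dilation.
by move=> _ [m [U [U_unitary KU ->]]]; apply: acos_trace_le_unitary_cost.
Qed.
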